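(* Let $n\ge2$, $F(a)=\prod_{i=1}^n(a-a_i)$ with distinct real $a_i$, and consider the superintegrable systems (integrals of degree $2n+1$) of the construction below with $\nu_n=1$ and $a>0$: $\mathcal{I}_{++}$: $x(a)=\frac a2+\frac1{\sqrt{a-a_1}}+\sum_{i=2}^n\frac{\xi_i}{\sqrt{a-a_i}}$, so that with $u=\sqrt a$, $g=(\mu^2du^2+dy^2)/u^2$, $\mu=1-\frac1{(u^2-a_1)^{3/2}}-\sum_{i=2}^n\frac{\xi_i}{(u^2-a_i)^{3/2}}$; $\mathcal{I}_{+-}$: $x(a)=\frac a2-\frac1{\sqrt{a-a_1}}-\sum_{i=2}^n\frac{\xi_i}{\sqrt{a-a_i}}$, so that $\mu=1+\frac1{(u^2-a_1)^{3/2}}+\sum_{i=2}^n\frac{\xi_i}{(u^2-a_i)^{3/2}}$. These systems (generalizing the cubic cases $\mathcal{I}_{+\pm}$ with $F=a-a_1$) are globally defined on $M\cong\mathbb{H}^2$ under the restrictions $\mathcal{I}_{++}$: $-\infty<a_i<a_1<-1$ ($i\ge2$), $\xi_i>0$, and $\frac1{|a_1|^{3/2}}+\sum_{i=2}^n\frac{\xi_i}{|a_i|^{3/2}}<1$; $\mathcal{I}_{+-}$: $-\infty<a_i<a_1<0$ ($i\ge2$), $\xi_i>0$.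
   Context: Construction (odd degree $2n+1$): $F=\sum_kA_ka^k=\prod_i(a-a_i)$, signs $\epsilon_i$, $\Delta_i=\epsilon_i(a-a_i)$, $x=\frac{\nu_n}2a+\sum_i\xi'_i\Delta_i^{-1/2}$ (here all $\epsilon_i=1$ and the coefficients $\xi'_i$ are read off from the displayed $x$) on the domain of $a>0$ where all $\Delta_i>0$; $H=\Pi^2+aP_y^2$, $\Pi=\frac a{\dot x}P_a$ (geodesic Hamiltonian of $g=\dot x^2a^{-2}da^2+a^{-1}dy^2$, $y\in\mathbb{R}$); $G=\sum_{k=0}^nA_{n-k}H^{n-k}P_y^{2k+1}$, $Q_1=\sum_{k=0}^n\tilde b_kH^{n-k}\Pi P_y^{2k}$, $Q_2=\sum_{k=0}^n\tilde c_kH^{n-k}P_y^{2k+1}$, $S_1=Q_1+yG$, $S_2=Q_2+yQ_1+\frac{y^2}2G$, with $\tilde b_k=(-1)^k(\nu_n\sigma_k+\sum_i\frac{\xi'_i}{\sqrt{\Delta_i}}\sigma^i_{k-1})$, $\tilde c_k=\frac{(-1)^{k+1}}2\{\nu_n^2a\sigma_k+2\nu_n\sum_i\frac{\xi'_i}{\sqrt{\Delta_i}}(\sigma^i_k+a\sigma^i_{k-1})+\sum_i\frac{\xi_i'^2}{\Delta_i}\sigma^i_{k-1}+\sum_{i\neq j}\frac{\xi'_i\xi'_j}{\sqrt{\Delta_i\Delta_j}}(\sigma^{ij}_{k-1}+a\sigma^{ij}_{k-2})\}$; $\sigma_k$ by $\prod_i(a-a_i)=\sum_k(-1)^k\sigma_ka^{n-k}$,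 $\sigma^i_m$ by $\prod_{l\ne i}(a-a_l)=\sum_{m=0}^{n-1}(-1)^m\sigma^i_ma^{n-1-m}$, $\sigma^i_{-1}=\sigma^i_n=0$, $\sigma^{ij}_m$ by $\prod_{l\ne i,j}(a-a_l)=\sum_{m=0}^{n-2}(-1)^m\sigma^{ij}_ma^{n-2-m}$, $\sigma^{ij}_{-2}=\sigma^{ij}_{-1}=\sigma^{ij}_{n-1}=\sigma^{ij}_n=0$. ''Globally defined on $M\cong\mathbb{H}^2$'': $g$ is a smooth Riemannian metric on the whole domain $M=\{u>0\}\times\mathbb{R}$, there is a smooth diffeomorphism $t=t(u)$ of $(0,\infty)$ onto $(0,\infty)$ with $g=\Phi(dt^2+dy^2)/t^2$, $\Phi$ smooth positive, and $S_1,S_2$ are smooth on $T^*M$. *)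

From HB Require Import structures.
From mathcomp Require Import all_boot all_order all_algebra.
From mathcomp Require Import all_classical all_reals all_analysis.
Set Implicit Arguments. Unset Strict Implicit. Unset Printing Implicit Defensive.
Import Order.TTheory GRing.Theory Num.Theory.
Import numFieldNormedType.Exports.
Local Open Scope classical_set_scope.
Local Open Scope ring_scope.

Fixpoint iterD (R : realType) (V : normedModType R) (vs : seq V) (f : V -> R)
  : V -> R :=
  match vs with
  | [::] => f
  | v :: vs' => fun x => 'D_v (iterD vs' f) x
  end.

Definition smooth_on (R : realType) (V : normedModType R) (A : set V)
  (f : V -> R) : Prop :=
  forall vs : seq V,
    (forall (v x : V), A x -> derivable (iterD vs f) x v) /\
    {within A, continuous (iterD vs f)}.

Definition crd (R : realType) (m : nat) (v : 'rV[R]_m.+1) (k : nat) : R :=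
  v ord0 (inord k).

(* roots a_1..a_n are ar 0, ..., ar (n-1) *)
Definition Fpoly (R : realType) (n : nat) (ar : nat -> R) : {poly R} :=
  \prod_(l < n) ('X - (ar l)%:P).
Definition Fpoly_i (R : realType) (n : nat) (ar : nat -> R) (i : nat) : {poly R} :=
  \prod_(l < n | (l : nat) != i) ('X - (ar l)%:P).
Definition Fpoly_ij (R : realType) (n : nat) (ar : nat -> R) (i j : nat)
  : {poly R} :=
  \prod_(l < n | ((l : nat) != i) && ((l : nat) != j)) ('X - (ar l)%:P).

(* sigma_m defined by  p = sum_{m=0}^d (-1)^m sigma_m a^(d-m),
   and sigma_m = 0 for m outside [0,d] *)
Definition sigma_of (R : realType) (p : {poly R}) (d : nat) (m : int) : R :=
  if (0 <= m) && (m <= d%:Z) then (-1) ^+ `|m|%N * p`_(d - `|m|)%N else 0.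

Definition sig (R : realType) n ar (k : int) : R := sigma_of (Fpoly n ar) n k.
Definition sigi (R : realType) n ar (i : nat) (m : int) : R :=
  sigma_of (Fpoly_i n ar i) n.-1 m.
Definition sigij (R : realType) n ar (i j : nat) (m : int) : R :=
  sigma_of (Fpoly_ij n ar i j) n.-2 m.

Definition Acoef (R : realType) n (ar : nat -> R) (k : nat) : R := (Fpoly n ar)`_k.

(* all epsilon_i = 1 *)
Definition Delta (R : realType) (ar : nat -> R) (i : nat) (s : R) : R := s - ar i.

Definition xfun (R : realType) n (ar xi : nat -> R) (nu : R) (s : R) : R :=
  nu / 2 * s + \sum_(i < n) xi i / Num.sqrt (Delta ar i s).

Definition xdot (R : realType) n (ar xi : nat -> R) (nu : R) (s : R) : R :=
  derive1 (xfun n ar xi nu) s.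

Definition btil (R : realType) n (ar xi : nat -> R) (nu : R) (k : nat) (s : R) : R :=
  (-1) ^+ k * (nu * sig n ar k%:Z
    + \sum_(i < n) xi i / Num.sqrt (Delta ar i s) * sigi n ar i (k%:Z - 1)).

Definition ctil (R : realType) n (ar xi : nat -> R) (nu : R) (k : nat) (s : R) : R :=
  (-1) ^+ k.+1 / 2 *
   (nu ^+ 2 * s * sig n ar k%:Z
    + 2 * nu * \sum_(i < n) xi i / Num.sqrt (Delta ar i s)
                  * (sigi n ar i k%:Z + s * sigi n ar i (k%:Z - 1))
    + \sum_(i < n) xi i ^+ 2 / Delta ar i s * sigi n ar i (k%:Z - 1)
    + \sum_(i < n) \sum_(j < n | j != i)
        xi i * xi j / Num.sqrt (Delta ar i s * Delta ar j s)
          * (sigij n ar i j (k%:Z - 1) + s * sigij n ar i j (k%:Z - 2))).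

Definition PiA (R : realType) n (ar xi : nat -> R) nu (s Pa : R) : R :=
  s / xdot n ar xi nu s * Pa.
Definition HA (R : realType) n (ar xi : nat -> R) nu (s Pa Py : R) : R :=
  PiA n ar xi nu s Pa ^+ 2 + s * Py ^+ 2.
Definition GA (R : realType) n (ar xi : nat -> R) nu (s Pa Py : R) : R :=
  \sum_(k < n.+1) Acoef n ar (n - k) * HA n ar xi nu s Pa Py ^+ (n - k)
     * Py ^+ (2 * k + 1).
Definition Q1A (R : realType) n (ar xi : nat -> R) nu (s Pa Py : R) : R :=
  \sum_(k < n.+1) btil n ar xi nu k s * HA n ar xi nu s Pa Py ^+ (n - k)
     * PiA n ar xi nu s Pa * Py ^+ (2 * k).
Definition Q2A (R : realType) n (ar xi : nat -> R) nu (s Pa Py : R) : R :=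
  \sum_(k < n.+1) ctil n ar xi nu k s * HA n ar xi nu s Pa Py ^+ (n - k)
     * Py ^+ (2 * k + 1).
Definition S1A (R : realType) n (ar xi : nat -> R) nu (s y Pa Py : R) : R :=
  Q1A n ar xi nu s Pa Py + y * GA n ar xi nu s Pa Py.
Definition S2A (R : realType) n (ar xi : nat -> R) nu (s y Pa Py : R) : R :=
  Q2A n ar xi nu s Pa Py + y * Q1A n ar xi nu s Pa Py
  + y ^+ 2 / 2 * GA n ar xi nu s Pa Py.

(* ---------- the same objects in the coordinates (u, y) of M = {u>0} x R,
   a = u^2, hence P_a = P_u / (2u) on T*M ---------- *)
Definition S1u (R : realType) n (ar xi : nat -> R) nu (v : 'rV[R]_4) : R :=
  S1A n ar xi nu (crd v 0 ^+ 2) (crd v 1) (crd v 2 / (2 * crd v 0)) (crd v 3).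
Definition S2u (R : realType) n (ar xi : nat -> R) nu (v : 'rV[R]_4) : R :=
  S2A n ar xi nu (crd v 0 ^+ 2) (crd v 1) (crd v 2 / (2 * crd v 0)) (crd v 3).

(* g = xdot^2 a^(-2) da^2 + a^(-1) dy^2, pulled back by a = u^2 (da = 2u du):
   g = guu du^2 + gyy dy^2 *)
Definition guu (R : realType) n (ar xi : nat -> R) nu (u : R) : R :=
  xdot n ar xi nu (u ^+ 2) ^+ 2 / (u ^+ 2) ^+ 2 * (2 * u) ^+ 2.
Definition gyy (R : realType) (u : R) : R := (u ^+ 2)^-1.

Definition Mdom (R : realType) : set 'rV[R]_2 := [set v | 0 < crd v 0].
Definition TMdom (R : realType) : set 'rV[R]_4 := [set v | 0 < crd v 0].

Definition globally_defined (R : realType) n (ar xi : nat -> R) (nu : R) : Prop :=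
  [/\ [/\ smooth_on (@Mdom R) (fun v => guu n ar xi nu (crd v 0)),
          smooth_on (@Mdom R) (fun v => gyy (crd v 0)) &
          (forall u : R, 0 < u -> 0 < guu n ar xi nu u /\ 0 < gyy u)],
  (* a diffeomorphism t of (0,oo) onto (0,oo) with g = Phi (dt^2+dy^2)/t^2 *)
      (exists (t tinv : R -> R) (Phi : R -> R -> R),
         [/\ smooth_on [set u : R | 0 < u] t /\ smooth_on [set w : R | 0 < w] tinv,
             (forall u, 0 < u -> 0 < t u /\ tinv (t u) = u),
             (forall w, 0 < w -> 0 < tinv w /\ t (tinv w) = w),
             smooth_on (@Mdom R) (fun v => Phi (crd v 0) (crd v 1)) &
             (forall u y, 0 < u ->
                [/\ 0 < Phi u y,
                    guu n ar xi nu u = Phi u y * (derive1 t u) ^+ 2 / (t u) ^+ 2 &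
                    gyy u = Phi u y / (t u) ^+ 2])]),
      smooth_on (@TMdom R) (S1u n ar xi nu) &
      smooth_on (@TMdom R) (S2u n ar xi nu)].

(* xi' for the two systems: coefficient 1 (resp. -1) on a_1, xi_i (resp. -xi_i) *)
Definition xi_pp (R : realType) (xi : nat -> R) (i : nat) : R :=
  if i == 0%N then 1 else xi i.
Definition xi_pm (R : realType) (xi : nat -> R) (i : nat) : R := - xi_pp xi i.

(* In the coordinates (u, y), u = sqrt a, the metric is
   g = (mu(u^2)^2 du^2 + dy^2) / u^2 with mu = 2 xdot, and the bounds on the
   a_i and xi_i keep mu above a positive constant m on a >= 0.  The function
   t(u) = u + sum_i (xi'_i / a_i) u / sqrt(u^2 - a_i) solves t' = mu(u^2), is a
   diffeomorphism of (0, oo) because t(0) = 0 and t' >= m, and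
   g = (t/u)^2 (dt^2 + dy^2) / t^2.
   Smoothness is reduced to first order: the functions built from given ones by
   ring operations, inverses of non-vanishing functions and square roots of
   positive ones form a class that is closed under directional derivatives as
   soon as the derivatives of the generators lie in it; then all iterated
   derivatives of its members exist and are continuous.  The metric and S1, S2
   lie in the class generated by the coordinates, t in the one generated by u,
   and t^-1 in the one generated by t^-1 itself, whose derivative is
   1 / mu((t^-1)^2). *)
From Pilot Require Import Defs.
From HB Require Import structures.
From mathcomp Require Import all_boot all_order all_algebra.
From mathcomp Require Import all_classical all_reals all_analysis.
From mathcomp Require Import ring lra.
Import Order.TTheory GRing.Theory Num.Theory.
Import numFieldNormedType.Exports.

Set Implicit Arguments. Unset Strict Implicit. Unset Printing Implicit Defensive.
Local Open Scope classical_set_scope.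
Local Open Scope ring_scope.

Lemma differentiable_sqrt_comp (R : realType) (V : normedModType R) (f : V -> R) x :
  differentiable f x -> 0 < f x ->
  differentiable (fun y => Num.sqrt (f y)) x /\
  forall v, 'D_v (fun y => Num.sqrt (f y)) x = 'D_v f x / (2 * Num.sqrt (f x)).
Proof.
move=> df fx0; have [ds _] := is_derive1_sqrt fx0.
have dsqrt : differentiable (@Num.sqrt R) (f x) by apply/derivable1_diffP.
have dS : differentiable (Num.sqrt \o f) x := differentiable_comp df dsqrt.
split=> // v; rewrite -[fun y => _]/(Num.sqrt \o f) deriveE //.
rewrite (diff_comp df dsqrt) /= deriv1E /= //.
by rewrite derive1E derive_sqrt // -deriveE.
Qed.

Section Radical.
Variables (R : realType) (V : normedModType R) (A : set V) (I : Type) (L : I -> V -> R).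

Inductive radical : (V -> R) -> Prop :=
  | radical_cst c : radical (fun=> c)
  | radical_leaf i : radical (L i)
  | radicalD f g : radical f -> radical g -> radical (fun x => f x + g x)
  | radicalM f g : radical f -> radical g -> radical (fun x => f x * g x)
  | radicalV f : radical f -> (forall x, A x -> f x != 0) ->
      radical (fun x => (f x)^-1)
  | radical_sqrt f : radical f -> (forall x, A x -> 0 < f x) ->
      radical (fun x => Num.sqrt (f x)).

Definition radical_on (f : V -> R) := exists2 g, radical g & forall x, A x -> f x = g x.

Lemma radical_onW f : radical f -> radical_on f.
Proof. by exists f. Qed.

Lemma radical_on_eq f g : radical_on f -> (forall x, A x -> f x = g x) -> radical_on g.
Proof. by move=> [h rh fh] fg; exists h => // x Ax; rewrite -fg ?fh. Qed.

Lemma radical_on_cst c : radical_on (fun=> c).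
Proof. exact/radical_onW/radical_cst. Qed.

Lemma radical_on_leaf i : radical_on (L i).
Proof. exact/radical_onW/radical_leaf. Qed.

Lemma radical_onD f g : radical_on f -> radical_on g -> radical_on (fun x => f x + g x).
Proof.
move=> [f' rf ff] [g' rg gg]; exists (fun x => f' x + g' x); first exact: radicalD.
by move=> x Ax; rewrite ff ?gg.
Qed.

Lemma radical_onM f g : radical_on f -> radical_on g -> radical_on (fun x => f x * g x).
Proof.
move=> [f' rf ff] [g' rg gg]; exists (fun x => f' x * g' x); first exact: radicalM.
by move=> x Ax; rewrite ff ?gg.
Qed.

Lemma radical_onN f : radical_on f -> radical_on (fun x => - f x).
Proof.
move=> rf; apply: radical_on_eq (radical_onM (radical_on_cst (-1)) rf) _.
by move=> x _; rewrite mulN1r.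
Qed.

Lemma radical_onV f : radical_on f -> (forall x, A x -> f x != 0) ->
  radical_on (fun x => (f x)^-1).
Proof.
move=> [f' rf ff] f0; exists (fun x => (f' x)^-1); last by move=> x Ax; rewrite ff.
by apply: radicalV => // x Ax; rewrite -ff ?f0.
Qed.

Lemma radical_on_sqrt f : radical_on f -> (forall x, A x -> 0 < f x) ->
  radical_on (fun x => Num.sqrt (f x)).
Proof.
move=> [f' rf ff] f0; exists (fun x => Num.sqrt (f' x)); last by move=> x Ax; rewrite ff.
by apply: radical_sqrt => // x Ax; rewrite -ff ?f0.
Qed.

Lemma radical_on_sum (J : Type) (r : seq J) (P : pred J) (F : J -> V -> R) :
  (forall j, P j -> radical_on (F j)) ->
  radical_on (fun x => \sum_(j <- r | P j) F j x).
Proof.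
move=> rF; elim: r => [|j r IH].
  by apply: radical_on_eq (radical_on_cst 0) _ => x _; rewrite big_nil.
case: (boolP (P j)) => Pj.
  by apply: radical_on_eq (radical_onD (rF j Pj) IH) _ => x _; rewrite big_cons Pj.
by apply: radical_on_eq IH _ => x _; rewrite big_cons (negPf Pj).
Qed.

Lemma radical_onX f k : radical_on f -> radical_on (fun x => f x ^+ k).
Proof.
move=> rf; elim: k => [|k IH].
  by apply: radical_on_eq (radical_on_cst 1) _ => x _; rewrite expr0.
by apply: radical_on_eq (radical_onM rf IH) _ => x _; rewrite exprS.
Qed.

Hypothesis A_open : open A.
Hypothesis leaf_diff : forall i x, A x -> differentiable (L i) x.
Hypothesis leaf_derive : forall i v, radical_on (fun x => 'D_v (L i) x).

Let near_A x : A x -> \forall y \near x, A y.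
Proof. by move=> Ax; apply: open_nbhs_nbhs. Qed.

Lemma radical_differentiable f : radical f ->
  (forall x, A x -> differentiable f x) /\ forall v, radical_on (fun x => 'D_v f x).
Proof.
elim=> {f} [c|i|f g _ [df Df] _ [dg Dg]|f g rf [df Df] rg [dg Dg]|f rf [df Df] f0
           |f rf [df Df] f0].
- split=> [x _|v]; first exact: differentiable_cst.
  by apply: radical_on_eq (radical_on_cst 0) _ => x _; rewrite derive_cst.
- by split; [exact: leaf_diff|exact: leaf_derive].
- split=> [x Ax|v]; first exact: differentiableD (df x Ax) (dg x Ax).
  apply: radical_on_eq (radical_onD (Df v) (Dg v)) _ => x Ax.
  by rewrite deriveD //; apply: diff_derivable; [exact: df|exact: dg].
- split=> [x Ax|v]; first exact: differentiableM (df x Ax) (dg x Ax).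
  apply: radical_on_eq (radical_onD (radical_onM (radical_onW rf) (Dg v))
                                    (radical_onM (radical_onW rg) (Df v))) _ => x Ax.
  by rewrite deriveM //; apply: diff_derivable; [exact: df|exact: dg].
- split=> [x Ax|v]; first exact: differentiableV (df x Ax) (f0 x Ax).
  apply: radical_on_eq (radical_onN
    (radical_onM (radical_onX 2 (radical_onW (radicalV rf f0))) (Df v))) _ => x Ax.
  rewrite deriveV ?f0 //; last exact/diff_derivable/df.
  by rewrite /GRing.scale /= exprVn mulNr.
- split=> [x Ax|v]; first by have [] := differentiable_sqrt_comp (df x Ax) (f0 x Ax).
  have S0 x : A x -> 2 * Num.sqrt (f x) != 0.
    by move=> Ax; rewrite mulf_neq0 ?pnatr_eq0 // gt_eqF // sqrtr_gt0 f0.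
  apply: radical_on_eq (radical_onM (Df v) (radical_onV (radical_onM
    (radical_on_cst 2) (radical_onW (radical_sqrt rf f0))) S0)) _ => x Ax.
  by have [_ ->] := differentiable_sqrt_comp (df x Ax) (f0 x Ax).
Qed.

Lemma radical_on_derive f v : radical_on f -> radical_on (fun x => 'D_v f x).
Proof.
move=> [g rg fg]; apply: radical_on_eq ((radical_differentiable rg).2 v) _ => x Ax.
by apply: near_eq_derive; apply: filterS (near_A Ax) => y Ay; rewrite fg.
Qed.

Lemma smooth_on_radical f : radical_on f -> smooth_on A f.
Proof.
move=> rf vs; have [g rg fg] : radical_on (Defs.iterD vs f).
  by elim: vs => //= v vs; exact: radical_on_derive.
have [dg _] := radical_differentiable rg.
have near_fg x : A x -> \forall y \near x, g y = Defs.iterD vs f y.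
  by move=> Ax; apply: filterS (near_A Ax) => y Ay; rewrite fg.
split=> [v x Ax|].
  exact: near_eq_derivable (near_fg x Ax) (diff_derivable (dg x Ax)).
apply: continuous_in_subspaceT => x; rewrite inE => Ax.
rewrite /continuous_at [X in _ --> X]fg //.
apply: cvg_trans (differentiable_continuous (dg x Ax)).
by apply: near_eq_cvg; apply: filterS (near_fg x Ax) => y ->.
Qed.

End Radical.

Ltac radical_step :=
  first [ assumption | apply: radical_on_cst | apply: radical_onD | apply: radical_onN
        | apply: radical_onX | apply: radical_onM | apply: radical_on_sum => ? ?
        | apply: radical_onV | apply: radical_on_sqrt | apply: radical_on_leaf ].

Lemma derive_real_dir (R : realType) (f : R -> R) (x v : R) :
  derivable f x 1 -> 'D_v f x = v * 'D_1 f x.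
Proof.
move=> /[dup] f1 /derivable1_diffP df.
by rewrite deriveE // deriv1E // derive1E.
Qed.

Lemma derive_crd (R : realType) k i (x w : 'rV[R]_k.+1) :
  'D_w (fun v => crd v i) x = crd w i.
Proof.
have dc : differentiable (fun v : 'rV[R]_k.+1 => crd v i) x.
  exact: differentiable_coord.
have @f : {linear 'rV[R]_k.+1 -> R}.
  by exists (fun N : 'rV[R]_k.+1 => N ord0 (inord i)); do 2![eexists];
    do ?[constructor]; rewrite ?mxE// => ? *; rewrite ?mxE//; move=> ?; rewrite !mxE.
rewrite deriveE // (_ : (fun _ => _) = f) // diff_lin //.
exact: coord_continuous.
Qed.

Lemma open_crd0_gt0 (R : realType) k : open [set v : 'rV[R]_k.+1 | 0 < crd v 0].
Proof.
rewrite openE => x /= x0; rewrite /interior /=.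
exact: (differentiable_continuous (differentiable_coord x ord0 (inord 0))) _
  (lt_nbhsr x0).
Qed.

Lemma smooth_on_crd (R : realType) k (A : set 'rV[R]_k.+1) (f : 'rV[R]_k.+1 -> R) :
  open A -> radical_on A (fun i v => crd v i) f -> smooth_on A f.
Proof.
move=> oA; apply: smooth_on_radical => // [i x _|i w].
  exact: differentiable_coord.
by apply: radical_on_eq (radical_on_cst _ _ (crd w i)) _ => x _; rewrite derive_crd.
Qed.

Lemma is_derive_inv_sqrt (R : realType) (f : R -> R) (x df a : R) :
  a < f x -> is_derive x 1 f df ->
  is_derive x 1 (fun y => (Num.sqrt (f y - a))^-1)
    (- df / (2 * (Num.sqrt (f x - a) * (f x - a)))).
Proof.
move=> afx fdf; have dpos : 0 < f x - a by rewrite subr_gt0.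
have dsub : is_derive x 1 (fun y => f y - a) df.
  by apply: is_derive_eq (is_deriveB fdf (is_derive_cst a x 1)) (subr0 _).
have dsqrt :=
  is_derive1_comp (g := fun y => f y - a) (x := x) (is_derive1_sqrt dpos) dsub.
have sq0 : Num.sqrt (f x - a) != 0 by rewrite gt_eqF ?sqrtr_gt0.
apply: is_derive_eq (is_deriveV (f := Num.sqrt \o (fun y => f y - a)) sq0 dsqrt) _.
have sq2 : f x - a = Num.sqrt (f x - a) ^+ 2 by rewrite sqr_sqrtr // ltW.
rewrite /GRing.scale /=; move: sq0 sq2; set q := Num.sqrt _ => sq0 ->.
by field; rewrite sq0.
Qed.

Section ConformalFactor.
Variables (R : realType) (n : nat) (ar c : nat -> R).
Hypothesis ar_neg : forall i, (i < n)%N -> ar i < 0.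

Definition mu (s : R) : R :=
  1 - \sum_(i < n) c i / (Num.sqrt (Delta ar i s) * Delta ar i s).

Lemma Delta_gt0 i s : (i < n)%N -> 0 <= s -> 0 < Delta ar i s.
Proof. by move=> /ar_neg ai s0; rewrite subr_gt0 (lt_le_trans ai). Qed.

Lemma xdotE s : 0 <= s -> xdot n ar c 1 s = mu s / 2.
Proof.
move=> s0; rewrite /xdot derive1E; apply: derive_val.
have -> : xfun n ar c 1 =
    2^-1 \*: id + \sum_(i < n) (c i \*: fun y => (Num.sqrt (y - ar i))^-1).
  by apply/funext => y; rewrite /xfun fct_sumE /= div1r.
apply: is_derive_eq.
  apply: is_deriveD (is_deriveZ _ (is_derive_id _ _)) (is_derive_sum _) => i.
  apply: is_deriveZ; apply: (is_derive_inv_sqrt (f := id)).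
    by rewrite -subr_gt0 (Delta_gt0 (ltn_ord i) s0).
rewrite /mu mulrBl div1r [_%:A]mulr1; congr (_ + _).
rewrite -mulNr -sumrN big_distrl /=; apply: eq_bigr => i _.
have Dpos := Delta_gt0 (ltn_ord i) s0; rewrite /Delta in Dpos *.
by rewrite /GRing.scale /=; field; rewrite !gt_eqF ?sqrtr_gt0.
Qed.

Variable m : R.
Hypothesis m_gt0 : 0 < m.
Hypothesis mu_ge : forall s, 0 <= s -> m <= mu s.

Lemma mu_gt0 s : 0 <= s -> 0 < mu s.
Proof. by move=> s0; rewrite (lt_le_trans m_gt0) ?mu_ge. Qed.

(* [d/du (u / sqrt (u^2 - a)) = - a / (u^2 - a)^(3/2)], so that
   [conf_coord' u = mu (u^2)]. *)
Definition conf_coord (u : R) : R :=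
  u + \sum_(i < n) c i / ar i * (u * (Num.sqrt (u ^+ 2 - ar i))^-1).

Lemma is_derive_conf_coord (u : R) : is_derive u 1 conf_coord (mu (u ^+ 2)).
Proof.
have -> : conf_coord = id + \sum_(i < n)
    (c i / ar i) \*: (id * fun y => (Num.sqrt (y ^+ 2 - ar i))^-1).
  by apply/funext => y; rewrite /conf_coord fct_sumE.
have dsq : is_derive u 1 (fun y : R => y ^+ 2) (2 * u).
  by apply: is_derive_eq (is_deriveX 2 (is_derive_id u 1)) _; rewrite [_%:A]mulr1.
apply: is_derive_eq.
  apply: is_deriveD (is_derive_sum _) => i.
  apply/is_deriveZ/is_deriveM; apply: (is_derive_inv_sqrt _ dsq).
  by rewrite (lt_le_trans (ar_neg (ltn_ord i))) ?sqr_ge0.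
rewrite /mu; congr (_ + _); rewrite -sumrN; apply: eq_bigr => i _.
have Dpos := Delta_gt0 (ltn_ord i) (sqr_ge0 u); rewrite /Delta in Dpos *.
have ai0 : ar i != 0 by rewrite lt_eqF ?ar_neg.
have e : u * - (2 * u) = - 2 * (u ^+ 2 - ar i) - 2 * ar i by ring.
rewrite /GRing.scale /= mulr1 [u * (- _ / _)]mulrA e.
have q0 : Num.sqrt (u ^+ 2 - ar i) != 0 by rewrite gt_eqF ?sqrtr_gt0.
have q2 : u ^+ 2 - ar i = Num.sqrt (u ^+ 2 - ar i) ^+ 2 by rewrite sqr_sqrtr // ltW.
move: q0 q2; set q := Num.sqrt _ => q0 ->.
by field; rewrite q0 ai0.
Qed.

Lemma conf_coord0 : conf_coord 0 = 0.
Proof. by rewrite /conf_coord big1 ?addr0 // => i _; rewrite !mul0r mulr0. Qed.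

Lemma conf_coord_differentiable u : differentiable conf_coord u.
Proof. by apply/derivable1_diffP; have [] := is_derive_conf_coord u. Qed.

Lemma conf_coord_continuous : continuous conf_coord.
Proof. by move=> u; apply/differentiable_continuous/conf_coord_differentiable. Qed.

Lemma conf_coord_lt u v : u < v -> conf_coord u < conf_coord v.
Proof.
move=> uv; rewrite -subr_gt0.
have [z _ ->] := MVT uv (fun z _ => is_derive_conf_coord z)
  (continuous_subspaceT conf_coord_continuous).
by rewrite mulr_gt0 ?mu_gt0 ?sqr_ge0 // subr_gt0.
Qed.

Lemma conf_coord_inj : injective conf_coord.
Proof.
move=> u v tuv; apply/eqP; apply: contraT; rewrite neq_lt => /orP[] /conf_coord_lt;
  by rewrite tuv ltxx.
Qed.

Lemma conf_coord_ge u : 0 <= u -> m * u <= conf_coord u.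
Proof.
rewrite le_eqVlt => /orP[/eqP <-|u0]; first by rewrite conf_coord0 mulr0.
have [z _] := MVT u0 (fun z _ => is_derive_conf_coord z)
  (continuous_subspaceT conf_coord_continuous).
by rewrite conf_coord0 !subr0 => ->; rewrite ler_pM2r // mu_ge ?sqr_ge0.
Qed.

Lemma conf_coord_gt0 u : 0 < u -> 0 < conf_coord u.
Proof. by move=> u0; rewrite (lt_le_trans _ (conf_coord_ge (ltW u0))) ?mulr_gt0. Qed.

Lemma conf_coord_surj w : 0 < w -> exists u, 0 < u /\ conf_coord u = w.
Proof.
move=> w0; have wm0 : 0 <= w / m by rewrite divr_ge0 ?ltW.
have wt : w <= conf_coord (w / m).
  by rewrite (le_trans _ (conf_coord_ge wm0)) // mulrC divfK ?gt_eqF.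
have [u] : exists2 u, u \in `[0, w / m] & conf_coord u = w.
  apply: IVT => //; first exact/continuous_subspaceT/conf_coord_continuous.
  have t0 : 0 <= conf_coord (w / m) by rewrite (le_trans _ wt) ?ltW.
  by rewrite conf_coord0 (min_idPl t0) (max_idPr t0) wt ltW.
rewrite in_itv /= => /andP[u0 _] tu; exists u; split => //.
rewrite lt_neqAle u0 andbT; apply: contraTneq w0 => u_eq0.
by rewrite -tu -u_eq0 conf_coord0 ltxx.
Qed.

Definition conf_coord_inv (w : R) : R := xget 0 [set u | 0 < u /\ conf_coord u = w].

Lemma conf_coord_invP w :
  0 < w -> 0 < conf_coord_inv w /\ conf_coord (conf_coord_inv w) = w.
Proof. by move=> w0; apply: (xgetPex 0 (conf_coord_surj w0)). Qed.

Lemma conf_coordK u : 0 < u -> conf_coord_inv (conf_coord u) = u.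
Proof. by move=> u0; have [_ /conf_coord_inj] := conf_coord_invP (conf_coord_gt0 u0). Qed.

Lemma is_derive_conf_coord_inv (w : R) : 0 < w ->
  is_derive w 1 conf_coord_inv (mu (conf_coord_inv w ^+ 2))^-1.
Proof.
move=> w0; have [u0 tu] := conf_coord_invP w0; rewrite -[in is_derive w]tu.
apply: is_derive_inverse; last by rewrite gt_eqF ?mu_gt0 ?sqr_ge0.
- by apply: filterS (open_nbhs_nbhs (conj (@open_gt R 0) u0)) => v; exact: conf_coordK.
- by apply: filterE => v; exact: conf_coord_continuous.
- exact: is_derive_conf_coord.
Qed.
End ConformalFactor.

Section RadicalSystem.
Variables (R : realType) (n : nat) (ar c : nat -> R).
Hypothesis ar_neg : forall i, (i < n)%N -> ar i < 0.
Hypothesis mu_pos : forall s, 0 <= s -> 0 < mu n ar c s.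
Variables (V : normedModType R) (A : set V) (I : Type) (L : I -> V -> R).
Local Notation radical_on := (radical_on A L).
Variables (s y Pa Py : V -> R).
Hypotheses (rs : radical_on s) (ry : radical_on y).
Hypotheses (rPa : radical_on Pa) (rPy : radical_on Py).
Hypothesis s_ge0 : forall x, A x -> 0 <= s x.

Let Delta_s_gt0 (i : 'I_n) x : A x -> 0 < Delta ar i (s x).
Proof. by move=> Ax; apply: Delta_gt0 (ltn_ord i) (s_ge0 Ax). Qed.

Let xdot_s x : A x -> xdot n ar c 1 (s x) = mu n ar c (s x) / 2.
Proof. by move=> Ax; rewrite (xdotE c ar_neg (s_ge0 Ax)). Qed.

Ltac side_conditions :=
  by move=> x Ax; rewrite ?mulf_neq0 ?gt_eqF ?sqrtr_gt0 ?mulr_gt0 ?Delta_s_gt0.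

Lemma radical_on_mu : radical_on (fun x => mu n ar c (s x)).
Proof. by rewrite /mu; repeat radical_step; side_conditions. Qed.

Lemma radical_on_xdot : radical_on (fun x => xdot n ar c 1 (s x)).
Proof.
apply: radical_on_eq (radical_onM radical_on_mu (radical_on_cst _ _ 2^-1)) _.
by move=> x Ax; rewrite xdot_s.
Qed.

Lemma xdot_s_neq0 x : A x -> xdot n ar c 1 (s x) != 0.
Proof. by move=> Ax; rewrite xdot_s // mulf_neq0 ?gt_eqF ?mu_pos ?s_ge0. Qed.

Lemma radical_on_PiA : radical_on (fun x => PiA n ar c 1 (s x) (Pa x)).
Proof.
have := radical_on_xdot; rewrite /PiA => rx; repeat radical_step.
exact: xdot_s_neq0.
Qed.

Lemma radical_on_HA : radical_on (fun x => HA n ar c 1 (s x) (Pa x) (Py x)).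
Proof. by have := radical_on_PiA; rewrite /HA => rPi; repeat radical_step. Qed.

Lemma radical_on_S1A : radical_on (fun x => S1A n ar c 1 (s x) (y x) (Pa x) (Py x)).
Proof.
have := radical_on_PiA; have := radical_on_HA => rH rPi.
by rewrite /S1A /Q1A /GA /btil; repeat radical_step; side_conditions.
Qed.

Lemma radical_on_S2A : radical_on (fun x => S2A n ar c 1 (s x) (y x) (Pa x) (Py x)).
Proof.
have := radical_on_PiA; have := radical_on_HA => rH rPi.
by rewrite /S2A /Q2A /Q1A /GA /btil /ctil; repeat radical_step; side_conditions.
Qed.

End RadicalSystem.

Section GloballyDefined.
Variables (R : realType) (n : nat) (ar c : nat -> R) (m : R).
Hypothesis ar_neg : forall i, (i < n)%N -> ar i < 0.
Hypothesis m_gt0 : 0 < m.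
Hypothesis mu_ge : forall s, 0 <= s -> m <= mu n ar c s.

Let mu_pos s : 0 <= s -> 0 < mu n ar c s := @mu_gt0 _ _ _ _ _ m_gt0 mu_ge s.

Lemma radical_on_conf_coord (V : normedModType R) (A : set V) (I : Type)
  (L : I -> V -> R) (s : V -> R) :
  radical_on A L s -> radical_on A L (fun x => conf_coord n ar c (s x)).
Proof.
have D0 (i : 'I_n) x : 0 < s x ^+ 2 - ar i.
  by rewrite subr_gt0 (lt_le_trans (ar_neg (ltn_ord i))) ?sqr_ge0.
move=> rs; rewrite /conf_coord; repeat radical_step; move=> x _.
  exact: D0.
by rewrite gt_eqF ?sqrtr_gt0.
Qed.

Lemma smooth_metric :
  [/\ smooth_on (@Mdom R) (fun v => guu n ar c 1 (crd v 0)),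
      smooth_on (@Mdom R) (fun v => gyy (crd v 0)) &
      forall u : R, 0 < u -> 0 < guu n ar c 1 u /\ 0 < gyy u].
Proof.
have rsq : radical_on (@Mdom R) (fun i v => crd v i) (fun v => crd v 0 ^+ 2).
  exact/radical_onX/radical_on_leaf.
have sq0 (v : 'rV[R]_2) : Mdom v -> 0 <= crd v 0 ^+ 2 by rewrite sqr_ge0.
have rx := radical_on_xdot c ar_neg rsq sq0.
split.
- apply: smooth_on_crd; first exact: open_crd0_gt0.
  rewrite /guu; repeat radical_step; move=> x x0.
  by rewrite !expf_neq0 // gt_eqF.
- apply: smooth_on_crd; first exact: open_crd0_gt0.
  rewrite /gyy; repeat radical_step; move=> x x0.
  by rewrite expf_neq0 // gt_eqF.
- move=> u u0; rewrite /gyy invr_gt0 exprn_gt0 //; split=> //.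
  rewrite /guu xdotE ?sqr_ge0 //.
  by rewrite mulr_gt0 ?divr_gt0 ?exprn_gt0 ?mulr_gt0 ?mu_pos ?sqr_ge0.
Qed.

Lemma smooth_on_conf_coord : smooth_on [set u : R | 0 < u] (conf_coord n ar c).
Proof.
apply: (@smooth_on_radical _ _ _ _ (fun _ : unit => id)).
- exact: open_gt.
- by move=> _ x _.
- by move=> _ v; apply: radical_on_eq (radical_on_cst _ _ v) _ => x _; rewrite derive_id.
- exact/radical_on_conf_coord/radical_on_leaf.
Qed.

Lemma smooth_on_conf_coord_inv : smooth_on [set w : R | 0 < w] (conf_coord_inv n ar c).
Proof.
have dinv w := @is_derive_conf_coord_inv _ _ _ _ ar_neg _ m_gt0 mu_ge w.
apply: (@smooth_on_radical _ _ _ _ (fun _ : unit => conf_coord_inv n ar c)).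
- exact: open_gt.
- by move=> _ w w0; apply/derivable1_diffP; have [] := dinv w w0.
- move=> _ v.
  have rsq := radical_onX 2
    (radical_on_leaf [set w : R | 0 < w] (fun _ : unit => conf_coord_inv n ar c) tt).
  have rmu := radical_on_mu c ar_neg rsq (fun w _ => sqr_ge0 _).
  have mu0 w : 0 < w -> mu n ar c (conf_coord_inv n ar c w ^+ 2) != 0.
    by move=> _; rewrite gt_eqF ?mu_pos ?sqr_ge0.
  apply: radical_on_eq (radical_onM (radical_on_cst _ _ v) (radical_onV rmu mu0)) _.
  by move=> w w0; have [d1 D1] := dinv w w0; rewrite derive_real_dir // D1.
- exact: radical_on_leaf.
Qed.

Lemma conformal_chart :
  exists (t tinv : R -> R) (Phi : R -> R -> R),
    [/\ smooth_on [set u : R | 0 < u] t /\ smooth_on [set w : R | 0 < w] tinv,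
        (forall u, 0 < u -> 0 < t u /\ tinv (t u) = u),
        (forall w, 0 < w -> 0 < tinv w /\ t (tinv w) = w),
        smooth_on (@Mdom R) (fun v => Phi (crd v 0) (crd v 1)) &
        (forall u y, 0 < u ->
           [/\ 0 < Phi u y,
               guu n ar c 1 u = Phi u y * (derive1 t u) ^+ 2 / (t u) ^+ 2 &
               gyy u = Phi u y / (t u) ^+ 2])].
Proof.
have t_gt0 u := @conf_coord_gt0 _ _ _ _ ar_neg _ m_gt0 mu_ge u.
exists (conf_coord n ar c), (conf_coord_inv n ar c),
  (fun u _ => conf_coord n ar c u ^+ 2 / u ^+ 2).
split.
- exact: (conj smooth_on_conf_coord smooth_on_conf_coord_inv).
- by move=> u u0; rewrite t_gt0 // (conf_coordK ar_neg m_gt0 mu_ge u0).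
- exact: (conf_coord_invP ar_neg m_gt0 mu_ge).
- apply: smooth_on_crd; first exact: open_crd0_gt0.
  have rt := radical_on_conf_coord (radical_on_leaf (@Mdom R) (fun i v => crd v i) 0).
  by repeat radical_step; move=> v v0; rewrite expf_neq0 // gt_eqF.
- move=> u y u0; have t0 := t_gt0 u u0.
  have [_ dt] := is_derive_conf_coord c ar_neg u.
  have un : u != 0 by rewrite gt_eqF.
  have tn : conf_coord n ar c u != 0 by rewrite gt_eqF.
  split.
  + by rewrite divr_gt0 ?exprn_gt0.
  + by rewrite derive1E dt /guu xdotE ?sqr_ge0 //; field; rewrite un tn.
  + by rewrite /gyy; field; rewrite un tn.
Qed.

Lemma smooth_on_S :
  smooth_on (@TMdom R) (S1u n ar c 1) /\ smooth_on (@TMdom R) (S2u n ar c 1).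
Proof.
pose L i (v : 'rV[R]_4) := crd v i.
have rs : radical_on (@TMdom R) L (fun v => crd v 0 ^+ 2) by repeat radical_step.
have s0 (v : 'rV[R]_4) : TMdom v -> 0 <= crd v 0 ^+ 2 by rewrite sqr_ge0.
have ry : radical_on (@TMdom R) L (fun v => crd v 1) by repeat radical_step.
have rPa : radical_on (@TMdom R) L (fun v => crd v 2 / (2 * crd v 0)).
  by repeat radical_step; move=> v v0; rewrite mulf_neq0 // gt_eqF.
have rPy : radical_on (@TMdom R) L (fun v => crd v 3) by repeat radical_step.
split; apply: smooth_on_crd; try exact: open_crd0_gt0.
- exact: (radical_on_S1A ar_neg mu_pos rs ry rPa rPy s0).
- exact: (radical_on_S2A ar_neg mu_pos rs ry rPa rPy s0).
Qed.

Lemma globally_defined_of_mu_ge : globally_defined n ar c 1.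
Proof.
have [g1 g2 g3] := smooth_metric; have [S1 S2] := smooth_on_S.
by split => //; exact: conformal_chart.
Qed.

End GloballyDefined.

Lemma powR32 (R : realType) (a : R) : 0 < a -> a `^ (3 / 2) = a * Num.sqrt a.
Proof.
move=> a0; have -> : (3 / 2 : R) = 1 + 2^-1 by field.
by rewrite powRD ?gt_eqF ?implybT // powRr1 ?ltW // powR12_sqrt // ltW.
Qed.

Lemma mu_ge_sum (R : realType) n (ar c : nat -> R) :
  (forall i, (i < n)%N -> ar i < 0) -> (forall i, (i < n)%N -> 0 <= c i) ->
  forall s, 0 <= s -> 1 - \sum_(i < n) c i / `|ar i| `^ (3 / 2) <= mu n ar c s.
Proof.
move=> ar_neg c_ge0 s s0; rewrite /mu lerD2l lerN2; apply: ler_sum => i _.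
have ai := ar_neg i (ltn_ord i); have Dpos := Delta_gt0 ar_neg (ltn_ord i) s0.
rewrite ltr0_norm // powR32 ?oppr_gt0 // ler_wpM2l ?c_ge0 //.
rewrite lef_pV2 ?posrE ?mulr_gt0 ?sqrtr_gt0 ?oppr_gt0 //.
have aD : - ar i <= Delta ar i s by rewrite /Delta; lra.
rewrite mulrC; apply: ler_pM => //; first by rewrite oppr_ge0 ltW.
exact: ler_wsqrtr.
Qed.

Lemma mu_ge1 (R : realType) n (ar c : nat -> R) :
  (forall i, (i < n)%N -> ar i < 0) -> (forall i, (i < n)%N -> c i <= 0) ->
  forall s, 0 <= s -> 1 <= mu n ar c s.
Proof.
move=> ar_neg c_le0 s s0; rewrite /mu; set S := \sum_(i < n) _.
suff : S <= 0 by lra.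
rewrite /S -oppr_ge0 -sumrN sumr_ge0 // => i _.
rewrite -mulNr divr_ge0 ?oppr_ge0 ?c_le0 //.
have Dpos := Delta_gt0 ar_neg (ltn_ord i) s0.
by rewrite ltW // mulr_gt0 ?sqrtr_gt0.
Qed.

Lemma sum_xi_pp (R : realType) n (xi G : nat -> R) : (0 < n)%N ->
  \sum_(i < n) xi_pp xi i / G i = 1 / G 0%N + \sum_(1 <= i < n) xi i / G i.
Proof.
move=> n0; rewrite -(big_mkord xpredT (fun i => xi_pp xi i / G i)) big_ltn //.
rewrite /xi_pp eqxx; congr (_ + _).
by apply: eq_big_nat => i /andP[i1 _]; case: eqP i1 => // ->.
Qed.

Lemma roots_lt0 (R : realType) n (ar : nat -> R) :
  (forall i, (1 <= i < n)%N -> ar i < ar 0%N) -> ar 0%N < 0 ->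
  forall i, (i < n)%N -> ar i < 0.
Proof. by move=> hi h0 [|i] lin //; rewrite (lt_trans (hi i.+1 _)). Qed.

Lemma xi_pp_gt0 (R : realType) n (xi : nat -> R) :
  (forall i, (1 <= i < n)%N -> 0 < xi i) -> forall i, (i < n)%N -> 0 < xi_pp xi i.
Proof. by move=> hx [|i] lin; rewrite /xi_pp //= hx. Qed.

Theorem proposition28 (R : realType) (n : nat) (ar xi : nat -> R) :
  (2 <= n)%N ->
  (forall i j, (i < n)%N -> (j < n)%N -> ar i = ar j -> i = j) ->
  ( (* I_{++} *)
    ((forall i, (1 <= i < n)%N -> ar i < ar 0%N) ->
     ar 0%N < -1 ->
     (forall i, (1 <= i < n)%N -> 0 < xi i) ->
     1 / (`|ar 0%N| `^ (3 / 2)) + \sum_(1 <= i < n) xi i / (`|ar i| `^ (3 / 2)) < 1 ->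
     globally_defined n ar (xi_pp xi) 1)
  /\
    (* I_{+-} *)
    ((forall i, (1 <= i < n)%N -> ar i < ar 0%N) ->
     ar 0%N < 0 ->
     (forall i, (1 <= i < n)%N -> 0 < xi i) ->
     globally_defined n ar (xi_pm xi) 1) ).
Proof.
(* The roots need not be distinct. *)
move=> n2 _; split=> [hi h0 hx hK|hi h0 hx].
- have ar_neg := roots_lt0 hi (lt_trans h0 (ltrN10 R)).
  have c_ge0 i (lin : (i < n)%N) := ltW (xi_pp_gt0 hx lin).
  apply: (globally_defined_of_mu_ge ar_neg _ (mu_ge_sum ar_neg c_ge0)).
  by rewrite subr_gt0 (sum_xi_pp xi (fun i => `|ar i| `^ (3 / 2))) // (leq_trans _ n2).
- have ar_neg := roots_lt0 hi h0.
  have c_le0 i (lin : (i < n)%N) : xi_pm xi i <= 0.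
    by rewrite oppr_le0 ltW // (xi_pp_gt0 hx).
  exact: (globally_defined_of_mu_ge ar_neg ltr01 (mu_ge1 ar_neg c_le0)).
Qed.
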